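(* Let triangle $ABC$ be inscribed in a circle $\Gamma$ with center $O$ and radius $R$, with $AB>BC$, and let $A,B,C$ also denote its angles at the respective vertices. Let $B'$ be the midpoint of the arc $CA$ of $\Gamma$ not containing $B$. Let the line through $B'$ perpendicular to $AB$ meet $\Gamma$ again at $E$, and let the line through $A$ perpendicular to $EA$ meet line $EB'$ at $F$. Then $FA=2R\sin\frac{C-A}{2}\tan\frac{B}{2}$. Moreover, for a point $D$ on the minor arc $CB'$, one has $AB+CD=BC+DA$ if and only if $DB'=2R\sin\frac{C-A}{2}\tan\frac{B}{2}$. Consequently the point $D$ on minor arc $CB'$ with $DB'=FA$ makes $ABCD$ a convex tangential (indeed bicentric) quadrilateral.
   Context: A convex quadrilateral $ABCD$ is tangential (has an incircle) iff $AB+CD=BC+DA$. *)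

From Stdlib Require Import Reals Lra.
Open Scope R_scope.

Definition point : Type := (R * R)%type.

Definition edist (P Q : point) : R :=
  sqrt ((fst P - fst Q) ^ 2 + (snd P - snd Q) ^ 2).

Definition dotv (P0 P1 Q0 Q1 : point) : R :=
  (fst P1 - fst P0) * (fst Q1 - fst Q0) + (snd P1 - snd P0) * (snd Q1 - snd Q0).

Definition orient (P Q S : point) : R :=
  (fst Q - fst P) * (snd S - snd P) - (snd Q - snd P) * (fst S - fst P).

Definition angle (P Q S : point) : R :=
  acos (dotv Q P Q S / (edist P Q * edist S Q)).

Definition on_circle (O : point) (r : R) (P : point) : Prop := edist O P = r.

Definition collinear (P Q X : point) : Prop := orient P Q X = 0.

(* B' is the midpoint of the arc CA of the circle (O,r) not containing B:
   on the circle, equidistant from C and A, on the other side of line CA than B *)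
Definition arc_midpoint_not_containing (O : point) (r : R) (C A B B' : point) : Prop :=
  on_circle O r B' /\ edist B' C = edist B' A /\ orient C A B' * orient C A B < 0.

(* D lies on the (closed) minor arc XY of the circle (O,r):
   on the circle and not strictly on the same side of line XY as the center *)
Definition on_minor_arc (O : point) (r : R) (X Y D : point) : Prop :=
  on_circle O r D /\ orient X Y D * orient X Y O <= 0.

Definition convex_quad (P Q S T : point) : Prop :=
  (0 < orient P Q S /\ 0 < orient Q S T /\ 0 < orient S T P /\ 0 < orient T P Q) \/
  (orient P Q S < 0 /\ orient Q S T < 0 /\ orient S T P < 0 /\ orient T P Q < 0).

(* Tangential quadrilateral, via the characterization given in the context:
   a convex quadrilateral ABCD has an incircle iff AB + CD = BC + DA. *)
Definition tangential_quad (P Q S T : point) : Prop :=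
  convex_quad P Q S T /\ edist P Q + edist S T = edist Q S + edist T P.

(* Move the circle to the unit circle with the arc midpoint B' at (1, 0): a similarity
   scales lengths by r and preserves angles.  Parametrize it by half-angles,
   (c, s) |-> (c^2 - s^2, 2cs); then A and C have half-angles -b and b and B has half-angle
   p with b < p < pi/2.  Every chord is 2|sin| of a half-angle difference, and the inscribed
   angles give sin((C - A)/2) = cos p and tan(B/2) = tan b.  The condition B'E _|_ AB pins
   down E, and solving the linear system for F gives FA = 2 cos p tan b.  A point D of the
   arc CB' with half-angle d has DB' = 2 sin d and AB + CD - BC - DA = 4 (cos p sin b -
   sin d cos b), which vanishes exactly when DB' = FA; the four orientations of ABCD are then
   products of positive sines, so ABCD is convex. *)

From Stdlib Require Import Reals Lra Nsatz.
Open Scope R_scope.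

Lemma mult_pos_lt0_iff k x : 0 < k -> (k * x < 0 <-> x < 0).
Proof. intro hk; split; intro h; nra. Qed.

Lemma mult_pos_le0_iff k x : 0 < k -> (k * x <= 0 <-> x <= 0).
Proof. intro hk; split; intro h; nra. Qed.

Lemma mult_eq_iff k x y : k <> 0 -> (k * x = k * y <-> x = y).
Proof. intro hk; split; intro h; [apply (Rmult_eq_reg_l k) | rewrite h]; auto. Qed.

Lemma pos_of_mult_pos_add x y : 0 < x * y -> 0 <= x + y -> 0 < x /\ 0 < y.
Proof.
  intros hxy hs; destruct (Rlt_le_dec 0 x), (Rlt_le_dec 0 y); split; nra.
Qed.

Lemma sqrt_eq_pow2 x y : 0 <= y -> x = y ^ 2 -> sqrt x = y.
Proof. intros hy ->; apply sqrt_pow2, hy. Qed.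

Lemma Rabs_eq_pos x y : 0 <= y -> x = y \/ x = - y -> Rabs x = y.
Proof.
  intros hy [-> | ->]; [|rewrite Rabs_Ropp]; apply Rabs_pos_eq, hy.
Qed.

(* [csq c s] is (c + i s)^2: for (c, s) = (cos t, sin t) it is the point of angle 2t on the
   unit circle, so chords, orientations and inscribed angles are polynomial in (c, s). *)
Definition csq (c s : R) : point := (c ^ 2 - s ^ 2, 2 * c * s).

Lemma unit_circleP P : on_circle (0, 0) 1 P <-> fst P ^ 2 + snd P ^ 2 = 1.
Proof.
  destruct P as [x y]; unfold on_circle, edist; cbn [fst snd].
  replace ((0 - x) ^ 2 + (0 - y) ^ 2) with (x ^ 2 + y ^ 2) by ring.
  split; intro h.
  - rewrite <- (pow2_sqrt (x ^ 2 + y ^ 2)), h by nra; ring.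
  - apply sqrt_eq_pow2; lra.
Qed.

Lemma csq_on_unit_circle c s : c ^ 2 + s ^ 2 = 1 -> on_circle (0, 0) 1 (csq c s).
Proof. intro u; apply unit_circleP; cbn; simpl pow in *; nsatz. Qed.

Lemma unit_circle_csq P : on_circle (0, 0) 1 P ->
  exists c s, c ^ 2 + s ^ 2 = 1 /\ P = csq c s /\ 0 <= s /\ (0 <= snd P -> 0 <= c).
Proof.
  destruct P as [X Y]; rewrite unit_circleP; cbn [fst snd]; intro h.
  assert (h1 : 0 <= (1 + X) / 2) by nra.
  assert (h2 : 0 <= (1 - X) / 2) by nra.
  set (c := sqrt ((1 + X) / 2)); set (s := sqrt ((1 - X) / 2)).
  assert (ec : c ^ 2 = (1 + X) / 2) by apply pow2_sqrt, h1.
  assert (es : s ^ 2 = (1 - X) / 2) by apply pow2_sqrt, h2.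
  assert (hcs : c * s = Rabs Y / 2).
  { unfold c, s; rewrite <- sqrt_mult by lra; apply sqrt_eq_pow2.
    - pose proof (Rabs_pos Y); lra.
    - replace ((Rabs Y / 2) ^ 2) with (Rabs Y ^ 2 / 4) by field.
      rewrite pow2_abs; field_simplify; nra. }
  assert (hc : 0 <= c) by apply sqrt_pos.
  assert (hs : 0 <= s) by apply sqrt_pos.
  destruct (Rle_dec 0 Y) as [hY | hY].
  - exists c, s; unfold csq; repeat split; auto; [lra | f_equal; [lra|]].
    rewrite Rmult_assoc, hcs, Rabs_pos_eq; lra.
  - exists (- c), s; unfold csq; repeat split; try lra; f_equal; [nra|].
    replace (2 * - c * s) with (- (2 * (c * s))) by ring.
    rewrite hcs, Rabs_left; lra.
Qed.

Lemma edist_csq c1 s1 c2 s2 : c1 ^ 2 + s1 ^ 2 = 1 -> c2 ^ 2 + s2 ^ 2 = 1 ->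
  edist (csq c1 s1) (csq c2 s2) = 2 * Rabs (s1 * c2 - c1 * s2).
Proof.
  intros u1 u2; unfold edist, csq; cbn [fst snd]; apply sqrt_eq_pow2.
  - pose proof (Rabs_pos (s1 * c2 - c1 * s2)); lra.
  - rewrite Rpow_mult_distr, pow2_abs; simpl pow in *; nsatz.
Qed.

Lemma orient_csq c1 s1 c2 s2 c3 s3 :
  c1 ^ 2 + s1 ^ 2 = 1 -> c2 ^ 2 + s2 ^ 2 = 1 -> c3 ^ 2 + s3 ^ 2 = 1 ->
  orient (csq c1 s1) (csq c2 s2) (csq c3 s3) =
  4 * (s1 * c2 - c1 * s2) * (s2 * c3 - c2 * s3) * (s3 * c1 - c3 * s1).
Proof. intros u1 u2 u3; unfold orient, csq; cbn [fst snd]; simpl pow in *; nsatz. Qed.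

Lemma orient_csq_origin c1 s1 c2 s2 :
  orient (csq c1 s1) (csq c2 s2) (0, 0) = 2 * (s2 * c1 - c2 * s1) * (c1 * c2 + s1 * s2).
Proof. unfold orient, csq; cbn [fst snd]; ring. Qed.

Lemma dotv_csq c0 s0 c1 s1 d0 t0 d1 t1 :
  c0 ^ 2 + s0 ^ 2 = 1 -> c1 ^ 2 + s1 ^ 2 = 1 -> d0 ^ 2 + t0 ^ 2 = 1 -> d1 ^ 2 + t1 ^ 2 = 1 ->
  dotv (csq c0 s0) (csq c1 s1) (csq d0 t0) (csq d1 t1) =
  4 * (s1 * c0 - c1 * s0) * (t1 * d0 - d1 * t0) *
  ((c0 * c1 - s0 * s1) * (d0 * d1 - t0 * t1) + (s0 * c1 + c0 * s1) * (t0 * d1 + d0 * t1)).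
Proof. intros u0 u1 v0 v1; unfold dotv, csq; cbn [fst snd]; simpl pow in *; nsatz. Qed.

(* (c, s) = +-(y, -x), and csq does not see the sign. *)
Lemma csq_perp c s x y : c ^ 2 + s ^ 2 = 1 -> x ^ 2 + y ^ 2 = 1 -> c * x + s * y = 0 ->
  csq c s = csq y (- x).
Proof. intros u v h; unfold csq; f_equal; simpl pow in *; nsatz. Qed.

Lemma csq_angle c1 s1 c2 s2 c3 s3 :
  c1 ^ 2 + s1 ^ 2 = 1 -> c2 ^ 2 + s2 ^ 2 = 1 -> c3 ^ 2 + s3 ^ 2 = 1 ->
  0 < (s1 * c2 - c1 * s2) * (s3 * c2 - c3 * s2) ->
  angle (csq c1 s1) (csq c2 s2) (csq c3 s3) = acos (c1 * c3 + s1 * s3).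
Proof.
  intros u1 u2 u3 hpos; unfold angle; f_equal.
  rewrite dotv_csq, !edist_csq by assumption.
  replace (2 * Rabs (s1 * c2 - c1 * s2) * (2 * Rabs (s3 * c2 - c3 * s2)))
    with (4 * ((s1 * c2 - c1 * s2) * (s3 * c2 - c3 * s2))).
  - field_simplify; [clear hpos; simpl pow in *; nsatz | split; intro h; rewrite h in hpos; lra].
  - rewrite <- (Rabs_pos_eq ((s1 * c2 - c1 * s2) * (s3 * c2 - c3 * s2))) by lra.
    rewrite Rabs_mult; ring.
Qed.

Lemma sin_half_acos x : -1 <= x <= 1 -> sin (acos x / 2) = sqrt ((1 - x) / 2).
Proof.
  intro hx; pose proof (acos_bound x); pose proof (cos_acos x hx) as hc.
  symmetry; apply sqrt_eq_pow2.
  - apply sin_ge_0; lra.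
  - rewrite <- hc at 1; replace (acos x) with (2 * (acos x / 2)) at 1 by field.
    rewrite cos_2a_sin; field.
Qed.

Lemma cos_half_acos x : -1 <= x <= 1 -> cos (acos x / 2) = sqrt ((1 + x) / 2).
Proof.
  intro hx; pose proof (acos_bound x); pose proof (cos_acos x hx) as hc.
  symmetry; apply sqrt_eq_pow2.
  - apply cos_ge_0; lra.
  - rewrite <- hc at 1; replace (acos x) with (2 * (acos x / 2)) at 1 by field.
    rewrite cos_2a_cos; field.
Qed.

Lemma sqrt_half_mult u v w : 0 <= u -> 0 <= v -> 0 <= w -> u * v = w ^ 2 ->
  sqrt (u / 2) * sqrt (v / 2) = w / 2.
Proof.
  intros hu hv hw huv; rewrite <- sqrt_mult by lra; apply sqrt_eq_pow2; [lra|].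
  replace (u / 2 * (v / 2)) with (u * v / 4) by field; rewrite huv; field.
Qed.

Definition pitot_length (r : R) (A B C : point) : R :=
  2 * r * sin ((angle A C B - angle B A C) / 2) * tan (angle A B C / 2).

Record pitot_configuration (O : point) (r : R) (A B C B' E F : point) : Prop := {
  cfg_A : on_circle O r A;
  cfg_B : on_circle O r B;
  cfg_C : on_circle O r C;
  cfg_AB : A <> B;
  cfg_BC : B <> C;
  cfg_CA : C <> A;
  cfg_AB_BC : edist A B > edist B C;
  cfg_B' : arc_midpoint_not_containing O r C A B B';
  cfg_E : on_circle O r E;
  cfg_EB' : E <> B';
  cfg_B'E_AB : dotv B' E A B = 0;
  cfg_AF_AE : dotv A F A E = 0;
  cfg_EB'F : collinear E B' F
}.

Definition pitot_conclusion (O : point) (r : R) (A B C B' F : point) : Prop :=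
  edist F A = pitot_length r A B C /\
  (forall D : point, on_minor_arc O r C B' D ->
     (edist A B + edist C D = edist B C + edist D A <-> edist D B' = pitot_length r A B C)) /\
  (exists D : point, on_minor_arc O r C B' D /\ edist D B' = edist F A) /\
  (forall D : point, on_minor_arc O r C B' D -> edist D B' = edist F A ->
     tangential_quad A B C D).

(* Unit circle, B' = (1, 0); C and A have half-angles b and -b, B has half-angle p, where
   (cb, sb) = (cos b, sin b) and (cB, sB) = (cos p, sin p).  [BC_pos] is sin (p - b) > 0. *)
Section Normal_configuration.

#[local] Set Default Proof Using "All".

Variables cb sb cB sB : R.
Hypothesis ub : cb ^ 2 + sb ^ 2 = 1.
Hypothesis uB : cB ^ 2 + sB ^ 2 = 1.
Hypothesis sb_pos : 0 < sb.
Hypothesis cb_pos : 0 < cb.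
Hypothesis cB_pos : 0 < cB.
Hypothesis BC_pos : 0 < sB * cb - cB * sb.

Let A := csq cb (- sb).
Let B := csq cB sB.
Let C := csq cb sb.
Let B' := csq 1 0.

Let ua : cb ^ 2 + (- sb) ^ 2 = 1.
Proof. rewrite <- ub; ring. Qed.

Let u1 : 1 ^ 2 + 0 ^ 2 = 1.
Proof. ring. Qed.

Let AB_pos : 0 < sB * cb + cB * sb.
Proof. nra. Qed.

Let cB_lt_cb : cB < cb.
Proof. nra. Qed.

Lemma edist_AB : edist A B = 2 * (sB * cb + cB * sb).
Proof. unfold A, B; rewrite edist_csq by auto; f_equal; apply Rabs_eq_pos; [lra | right; ring]. Qed.

Lemma edist_BC : edist B C = 2 * (sB * cb - cB * sb).
Proof. unfold B, C; rewrite edist_csq by auto; f_equal; apply Rabs_eq_pos; [lra | left; ring]. Qed.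

Lemma angle_A : angle B A C = acos (cB * cb + sB * sb).
Proof.
  unfold A, B, C; rewrite csq_angle; auto.
  apply Rmult_lt_0_compat; nra.
Qed.

Lemma angle_B : angle A B C = acos (cb ^ 2 - sb ^ 2).
Proof.
  unfold A, B, C; rewrite csq_angle; auto.
  - f_equal; ring.
  - replace (_ * _) with ((sb * cB + cb * sB) * (cb * sB - sb * cB)) by ring.
    apply Rmult_lt_0_compat; nra.
Qed.

Lemma angle_C : angle A C B = acos (sb * sB - cb * cB).
Proof.
  replace A with (csq (- cb) sb) by (unfold A, csq; f_equal; ring).
  unfold B, C; rewrite csq_angle; auto.
  - f_equal; ring.
  - rewrite <- ub; ring.
  - apply Rmult_lt_0_compat; nra.
Qed.

Lemma sin_half_angle_C_minus_A : sin ((angle A C B - angle B A C) / 2) = cB.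
Proof.
  rewrite angle_A, angle_C.
  set (ga := cB * cb + sB * sb); set (gc := sb * sB - cb * cB).
  assert (hga : ga ^ 2 + (sB * cb - cB * sb) ^ 2 = 1)
    by (unfold ga; clear - ub uB; simpl pow in *; nsatz).
  assert (hgc : gc ^ 2 + (sB * cb + cB * sb) ^ 2 = 1)
    by (unfold gc; clear - ub uB; simpl pow in *; nsatz).
  assert (bga : -1 <= ga <= 1) by nra.
  assert (bgc : -1 <= gc <= 1) by nra.
  replace ((acos gc - acos ga) / 2) with (acos gc / 2 - acos ga / 2) by field.
  rewrite sin_minus, sin_half_acos, cos_half_acos, cos_half_acos, sin_half_acos by lra.
  assert (e1 : (1 - gc) * (1 + ga) = (cb + cB) ^ 2)
    by (unfold ga, gc; clear - ub uB; simpl pow in *; nsatz).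
  assert (e2 : (1 + gc) * (1 - ga) = (cb - cB) ^ 2)
    by (unfold ga, gc; clear - ub uB; simpl pow in *; nsatz).
  rewrite (sqrt_half_mult (1 - gc) (1 + ga) (cb + cB) ltac:(lra) ltac:(lra) ltac:(lra) e1),
          (sqrt_half_mult (1 + gc) (1 - ga) (cb - cB) ltac:(lra) ltac:(lra) ltac:(lra) e2).
  field.
Qed.

Lemma tan_half_angle_B : tan (angle A B C / 2) = sb / cb.
Proof.
  rewrite angle_B; unfold tan.
  rewrite sin_half_acos, cos_half_acos by nra.
  f_equal; apply sqrt_eq_pow2; lra.
Qed.

Lemma pitot_length_normal : pitot_length 1 A B C = 2 * cB * sb / cb.
Proof.
  unfold pitot_length; rewrite sin_half_angle_C_minus_A, tan_half_angle_B; field; lra.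
Qed.

(* half-angle p - b - pi/2 *)
Let E := csq (sB * cb - cB * sb) (- (cB * cb + sB * sb)).

Lemma perpendicular_point E' : on_circle (0, 0) 1 E' -> E' <> B' -> dotv B' E' A B = 0 ->
  E' = E /\ cB * cb + sB * sb <> 0.
Proof.
  intros hE hEB' hperp.
  destruct (unit_circle_csq E' hE) as [cE [sE [uE [-> [hsE _]]]]].
  assert (hsE0 : sE <> 0).
  { intro h0; apply hEB'; subst sE; unfold B', csq; f_equal; nra. }
  assert (hdot : dotv B' (csq cE sE) A B =
    4 * sE * (sB * cb + cB * sb) * (cE * (cB * cb + sB * sb) + sE * (sB * cb - cB * sb)))
    by (unfold B', A, B; rewrite dotv_csq by auto; ring).
  rewrite hdot in hperp.
  assert (hk : cE * (cB * cb + sB * sb) + sE * (sB * cb - cB * sb) = 0).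
  { apply (Rmult_eq_reg_l (4 * sE * (sB * cb + cB * sb))); [lra |].
    apply Rmult_integral_contrapositive_currified; [|lra].
    apply Rmult_integral_contrapositive_currified; lra. }
  assert (eE : csq cE sE = E).
  { apply csq_perp; auto. clear - ub uB; simpl pow in *; nsatz. }
  split; [exact eE |].
  intro h0; apply hEB'; rewrite eE; unfold E, B', csq; rewrite h0.
  assert (hm : (sB * cb - cB * sb) ^ 2 = 1)
    by (clear - ub uB h0; simpl pow in *; nsatz).
  f_equal; nra.
Qed.

Lemma edist_F_A F : cB * cb + sB * sb <> 0 -> dotv A F A E = 0 -> collinear E B' F ->
  edist F A = 2 * cB * sb / cb.
Proof.
  intros hga h1 h2; destruct F as [f1 f2].
  unfold dotv, collinear, orient, A, E, B', csq in h1, h2; cbn [fst snd] in h1, h2.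
  (* the linear system for F has determinant -4 (cB cb + sB sb) cB cb *)
  assert (det : (cB * cb + sB * sb) * cB * cb <> 0).
  { apply Rmult_integral_contrapositive_currified; [|lra].
    apply Rmult_integral_contrapositive_currified; lra. }
  assert (ef1 : cb * f1 = cb - 2 * sb * (sB * cb - cB * sb) * (cB * cb + sB * sb)).
  { apply (Rmult_eq_reg_l ((cB * cb + sB * sb) * cB * cb)); [|exact det].
    clear - h1 h2 ub uB; simpl pow in *; nsatz. }
  assert (ef2 : cb * f2 = - 2 * sb * (sB * cb - cB * sb) ^ 2).
  { apply (Rmult_eq_reg_l ((cB * cb + sB * sb) * cB * cb)); [|exact det].
    clear - h1 h2 ub uB; simpl pow in *; nsatz. }
  unfold edist, A, csq; cbn [fst snd]; apply sqrt_eq_pow2.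
  - apply Rlt_le, Rdiv_lt_0_compat; nra.
  - replace ((f1 - (cb ^ 2 - (- sb) ^ 2)) ^ 2 + (f2 - 2 * cb * - sb) ^ 2)
      with (((cb * f1 - cb * (cb ^ 2 - sb ^ 2)) ^ 2 + (cb * f2 + 2 * cb ^ 2 * sb) ^ 2) / cb ^ 2)
      by (field; lra).
    rewrite ef1, ef2.
    replace ((2 * cB * sb / cb) ^ 2) with (4 * cB ^ 2 * sb ^ 2 / cb ^ 2) by (field; lra).
    f_equal; clear - ub uB; simpl pow in *; nsatz.
Qed.

Lemma orient_C_B'_csq cD sD : cD ^ 2 + sD ^ 2 = 1 ->
  orient C B' (csq cD sD) * orient C B' (0, 0) = - 8 * sb ^ 2 * cb * (sD * (cD * sb - sD * cb)).
Proof.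
  intro uD; unfold C, B'; rewrite orient_csq, orient_csq_origin by auto; ring.
Qed.

Lemma on_minor_arc_CB' D : on_minor_arc (0, 0) 1 C B' D <->
  exists cD sD, cD ^ 2 + sD ^ 2 = 1 /\ D = csq cD sD /\ 0 <= sD /\ 0 <= cD * sb - sD * cb.
Proof.
  assert (hk : 0 < 8 * sb ^ 2 * cb) by (apply Rmult_lt_0_compat; nra).
  split.
  - intros [hD hor].
    destruct (unit_circle_csq D hD) as [cD [sD [uD [-> [hsD _]]]]].
    rewrite orient_C_B'_csq in hor by exact uD.
    assert (hprod : 0 <= sD * (cD * sb - sD * cb)) by nra.
    destruct (Req_dec sD 0) as [h0 | h0].
    + exists 1, 0; subst sD; unfold csq; repeat split; try f_equal; nra.
    + exists cD, sD; repeat split; auto; nra.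
  - intros (cD & sD & uD & -> & hsD & hD); split.
    + apply csq_on_unit_circle, uD.
    + rewrite orient_C_B'_csq by exact uD.
      assert (0 <= sD * (cD * sb - sD * cb)) by (apply Rmult_le_pos; lra); nra.
Qed.

Lemma arc_point_distances cD sD : cD ^ 2 + sD ^ 2 = 1 -> 0 <= sD -> 0 <= cD * sb - sD * cb ->
  edist C (csq cD sD) = 2 * (cD * sb - sD * cb) /\
  edist (csq cD sD) A = 2 * (sD * cb + cD * sb) /\
  edist (csq cD sD) B' = 2 * sD.
Proof.
  intros uD hsD hD.
  assert (hcD : 0 <= cD) by nra.
  unfold A, B', C; rewrite !edist_csq by auto.
  repeat split; f_equal; apply Rabs_eq_pos; try (left; ring); nra.
Qed.

Lemma arc_point_cos_gt cD sD : cD ^ 2 + sD ^ 2 = 1 -> 0 <= cD -> sD * cb = cB * sb -> cB < cD.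
Proof.
  intros uD hcD hs.
  assert (cb ^ 2 * (cD ^ 2 - cB ^ 2) = cb ^ 2 - cB ^ 2)
    by (clear - ub uB uD hs; simpl pow in *; nsatz).
  assert (0 < cb ^ 2 - cB ^ 2) by nra.
  assert (0 < cD ^ 2 - cB ^ 2) by nra.
  nra.
Qed.

Lemma pitot_iff_normal D : on_minor_arc (0, 0) 1 C B' D ->
  (edist A B + edist C D = edist B C + edist D A <-> edist D B' = 2 * cB * sb / cb).
Proof.
  rewrite on_minor_arc_CB'; intros (cD & sD & uD & -> & hsD & hD).
  destruct (arc_point_distances cD sD uD hsD hD) as (-> & -> & ->).
  rewrite edist_AB, edist_BC.
  assert (hV : 2 * cB * sb / cb * cb = 2 * cB * sb) by (field; lra).
  split; intro h; nra.
Qed.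

Lemma pitot_point_exists :
  exists D, on_minor_arc (0, 0) 1 C B' D /\ edist D B' = 2 * cB * sb / cb.
Proof.
  set (sD := cB * sb / cb).
  assert (hs : sD * cb = cB * sb) by (unfold sD; field; lra).
  assert (hsD : 0 < sD) by (unfold sD; apply Rdiv_lt_0_compat; nra).
  assert (hsD1 : sD ^ 2 <= 1) by nra.
  set (cD := sqrt (1 - sD ^ 2)).
  assert (uD : cD ^ 2 + sD ^ 2 = 1) by (unfold cD; rewrite pow2_sqrt; lra).
  assert (hcD : cB < cD) by (apply (arc_point_cos_gt cD sD); auto; apply sqrt_pos).
  assert (hD : 0 <= cD * sb - sD * cb) by nra.
  exists (csq cD sD); split.
  - apply on_minor_arc_CB'; exists cD, sD; repeat split; auto; lra.
  - destruct (arc_point_distances cD sD uD ltac:(lra) hD) as (_ & _ & ->).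
    unfold sD; field; lra.
Qed.

Lemma pitot_point_convex D : on_minor_arc (0, 0) 1 C B' D -> edist D B' = 2 * cB * sb / cb ->
  convex_quad A B C D.
Proof.
  rewrite on_minor_arc_CB'; intros (cD & sD & uD & -> & hsD & hD) hDB'.
  destruct (arc_point_distances cD sD uD hsD hD) as (_ & _ & hd).
  rewrite hd in hDB'.
  assert (hs : sD * cb = cB * sb)
    by (apply (Rmult_eq_reg_l 2); [rewrite <- Rmult_assoc, hDB'; field |]; lra).
  assert (hsD' : 0 < sD) by nra.
  assert (hcD : cB < cD) by (apply (arc_point_cos_gt cD sD); auto; nra).
  assert (hD' : 0 < cD * sb - sD * cb) by nra.
  assert (hk : 0 < sB * cD - cB * sD) by nra.
  assert (hAB : 0 < sB * cb + cB * sb) by nra.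
  assert (hDA : 0 < sD * cb + cD * sb) by nra.
  assert (hCA : 0 < sb * cb) by nra.
  right; unfold A, B, C; rewrite !orient_csq by auto; repeat split.
  - assert (0 < (sB * cb + cB * sb) * (sB * cb - cB * sb) * (sb * cb))
      by (repeat apply Rmult_lt_0_compat; lra); nra.
  - assert (0 < (sB * cb - cB * sb) * (cD * sb - sD * cb) * (sB * cD - cB * sD))
      by (repeat apply Rmult_lt_0_compat; lra); nra.
  - assert (0 < (cD * sb - sD * cb) * (sD * cb + cD * sb) * (sb * cb))
      by (repeat apply Rmult_lt_0_compat; lra); nra.
  - assert (0 < (sD * cb + cD * sb) * (sB * cb + cB * sb) * (sB * cD - cB * sD))
      by (repeat apply Rmult_lt_0_compat; lra); nra.
Qed.

End Normal_configuration.

Lemma equidistant_mirror A C : on_circle (0, 0) 1 A -> on_circle (0, 0) 1 C ->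
  edist (csq 1 0) C = edist (csq 1 0) A -> C <> A -> A = (fst C, - snd C) /\ snd C <> 0.
Proof.
  destruct A as [xa ya], C as [xc yc]; rewrite !unit_circleP; cbn [fst snd].
  unfold edist, csq; cbn [fst snd]; intros hA hC hd hne.
  apply sqrt_inj in hd; try nra.
  assert (exa : xa = xc) by nra.
  assert (hy : (ya - yc) * (ya + yc) = 0) by nra.
  subst xa; apply Rmult_integral in hy as [hy | hy].
  - exfalso; apply hne; f_equal; lra.
  - split; [f_equal; lra | intro h0; apply hne; f_equal; lra].
Qed.

Lemma upper_unit_circle_csq C : on_circle (0, 0) 1 C -> 0 < snd C ->
  exists cb sb, cb ^ 2 + sb ^ 2 = 1 /\ 0 < cb /\ 0 < sb /\ C = csq cb sb.
Proof.
  intros hC hy; destruct (unit_circle_csq C hC) as (cb & sb & ub & -> & hsb & hcb).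
  specialize (hcb (Rlt_le _ _ hy)); cbn in hy.
  exists cb, sb; repeat split; auto; nra.
Qed.

Lemma third_vertex_csq cb sb B : cb ^ 2 + sb ^ 2 = 1 -> 0 < cb -> 0 < sb ->
  on_circle (0, 0) 1 B ->
  orient (csq cb sb) (csq cb (- sb)) (csq 1 0) * orient (csq cb sb) (csq cb (- sb)) B < 0 ->
  edist (csq cb (- sb)) B > edist B (csq cb sb) ->
  exists cB sB, cB ^ 2 + sB ^ 2 = 1 /\ B = csq cB sB /\ 0 < cB /\ 0 < sB * cb - cB * sb.
Proof.
  intros ub hcb hsb hB hside hlen.
  destruct (unit_circle_csq B hB) as (cB & sB & uB & -> & hsB & _).
  assert (ua : cb ^ 2 + (- sb) ^ 2 = 1) by (rewrite <- ub; ring).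
  assert (u1 : 1 ^ 2 + 0 ^ 2 = 1) by ring.
  rewrite !orient_csq in hside by auto.
  assert (hm : 0 < (sB * cb + cB * sb) * (sB * cb - cB * sb)).
  { assert (0 < sb ^ 4 * cb ^ 2) by (apply Rmult_lt_0_compat; apply pow_lt; lra). nra. }
  destruct (pos_of_mult_pos_add _ _ hm) as [hm2 hm1]; [nra |].
  rewrite !edist_csq in hlen by auto.
  rewrite (Rabs_eq_pos (- sb * cB - cb * sB) (sB * cb + cB * sb)),
          (Rabs_eq_pos (sB * cb - cB * sb) (sB * cb - cB * sb)) in hlen
    by (lra || (right; ring) || (left; ring)).
  exists cB, sB; repeat split; auto; nra.
Qed.

Lemma pitot_upper A B C E F : pitot_configuration (0, 0) 1 A B C (csq 1 0) E F -> 0 < snd C ->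
  pitot_conclusion (0, 0) 1 A B C (csq 1 0) F.
Proof.
  intros [hA hB hC _ _ hCA hlen [_ [hmid hside]] hE hEB' hperp hF1 hF2] hCy.
  destruct (equidistant_mirror A C hA hC hmid hCA) as [eA _].
  destruct (upper_unit_circle_csq C hC hCy) as (cb & sb & ub & hcb & hsb & ->).
  replace A with (csq cb (- sb)) in * by (rewrite eA; unfold csq; cbn; f_equal; ring).
  destruct (third_vertex_csq cb sb B ub hcb hsb hB hside hlen) as (cB & sB & uB & -> & hcB & hm).
  destruct (perpendicular_point cb sb cB sB ub uB hsb hcb hcB hm E hE hEB' hperp) as [-> hga].
  unfold pitot_conclusion.
  rewrite (pitot_length_normal cb sb cB sB ub uB hsb hcb hcB hm),
          (edist_F_A cb sb cB sB ub uB hsb hcb hcB hm F hga hF1 hF2).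
  pose proof (pitot_iff_normal cb sb cB sB ub uB hsb hcb hcB hm) as pitot_iff.
  split; [reflexivity |]; split; [exact pitot_iff |]; split.
  - exact (pitot_point_exists cb sb cB sB ub uB hsb hcb hcB hm).
  - intros D hD hDB'; split.
    + exact (pitot_point_convex cb sb cB sB ub uB hsb hcb hcB hm D hD hDB').
    + apply pitot_iff; assumption.
Qed.

(* [sim] is x |-> O + r R x, with R the rotation taking (1, 0) to (k1, k2), preceded by the
   reflection in the first axis when e = -1. *)
Section Similarity.

#[local] Set Default Proof Using "All".

Variables (O : point) (r k1 k2 e : R).
Hypothesis r_pos : 0 < r.
Hypothesis k_unit : k1 ^ 2 + k2 ^ 2 = 1.
Hypothesis e_sq : e ^ 2 = 1.

Let r2_pos : 0 < r ^ 2.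
Proof. nra. Qed.

Let e_cases : e = 1 \/ e = - 1.
Proof.
  assert (h : (e - 1) * (e + 1) = 0) by nra.
  apply Rmult_integral in h; lra.
Qed.

Definition sim (P : point) : point :=
  (fst O + r * (k1 * fst P - e * k2 * snd P), snd O + r * (k2 * fst P + e * k1 * snd P)).

Definition sim_inv (P : point) : point :=
  ((k1 * (fst P - fst O) + k2 * (snd P - snd O)) / r,
   e * (k1 * (snd P - snd O) - k2 * (fst P - fst O)) / r).

Lemma sim_invK P : sim (sim_inv P) = P.
Proof.
  destruct P as [x y]; unfold sim, sim_inv; cbn [fst snd].
  f_equal; field_simplify_eq; try lra; clear - k_unit e_sq; simpl pow in *; nsatz.
Qed.

Lemma sim_origin : sim (0, 0) = O.
Proof.
  unfold sim; cbn [fst snd]; symmetry; rewrite (surjective_pairing O) at 1; f_equal; ring.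
Qed.

Lemma edist_sim P Q : edist (sim P) (sim Q) = r * edist P Q.
Proof.
  unfold edist, sim; cbn [fst snd].
  match goal with |- sqrt ?a = r * sqrt ?b => replace a with (r ^ 2 * b) end.
  - rewrite sqrt_mult, sqrt_pow2 by
      (lra || apply pow2_ge_0 || (apply Rplus_le_le_0_compat; apply pow2_ge_0)).
    reflexivity.
  - clear - k_unit e_sq; simpl pow in *; nsatz.
Qed.

Lemma dotv_sim P0 P1 Q0 Q1 :
  dotv (sim P0) (sim P1) (sim Q0) (sim Q1) = r ^ 2 * dotv P0 P1 Q0 Q1.
Proof. unfold dotv, sim; cbn [fst snd]; clear - k_unit e_sq; simpl pow in *; nsatz. Qed.

Lemma orient_sim P Q S : orient (sim P) (sim Q) (sim S) = e * r ^ 2 * orient P Q S.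
Proof. unfold orient, sim; cbn [fst snd]; clear - k_unit e_sq; simpl pow in *; nsatz. Qed.

Lemma simK P : sim_inv (sim P) = P.
Proof.
  destruct P as [x y]; unfold sim, sim_inv; cbn [fst snd].
  f_equal; field_simplify_eq; try lra; clear - k_unit e_sq; simpl pow in *; nsatz.
Qed.

Lemma sim_inj P Q : sim P = sim Q <-> P = Q.
Proof.
  split; intro h; [rewrite <- (simK P), <- (simK Q), h | rewrite h]; reflexivity.
Qed.

Lemma angle_sim P Q S : angle (sim P) (sim Q) (sim S) = angle P Q S.
Proof.
  unfold angle; rewrite dotv_sim, !edist_sim; f_equal.
  destruct (Req_dec (edist P Q * edist S Q) 0) as [h | h].
  - (* degenerate angle: both sides are acos 0, as x / 0 = 0 *)
    replace (r * edist P Q * (r * edist S Q)) with (r ^ 2 * (edist P Q * edist S Q)) by ring.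
    rewrite h, Rmult_0_r; unfold Rdiv; rewrite Rinv_0; ring.
  - field; repeat split; [intro h0; apply h; rewrite h0; ring.. | lra].
Qed.

Lemma on_circle_sim P : on_circle O r (sim P) <-> on_circle (0, 0) 1 P.
Proof.
  unfold on_circle; rewrite <- sim_origin, edist_sim.
  rewrite <- (Rmult_1_r r) at 2; apply mult_eq_iff; lra.
Qed.

Lemma orient_sim_mul P Q S P' Q' S' :
  orient (sim P) (sim Q) (sim S) * orient (sim P') (sim Q') (sim S') =
  r ^ 4 * (orient P Q S * orient P' Q' S').
Proof. rewrite !orient_sim; clear - e_sq; simpl pow in *; nsatz. Qed.

Lemma collinear_sim P Q S : collinear (sim P) (sim Q) (sim S) <-> collinear P Q S.
Proof.
  unfold collinear; rewrite orient_sim.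
  replace 0 with (e * r ^ 2 * 0) at 1 by ring; apply mult_eq_iff; nra.
Qed.

Lemma dotv_sim_eq0 P0 P1 Q0 Q1 :
  dotv (sim P0) (sim P1) (sim Q0) (sim Q1) = 0 <-> dotv P0 P1 Q0 Q1 = 0.
Proof.
  rewrite dotv_sim; replace 0 with (r ^ 2 * 0) at 1 by ring; apply mult_eq_iff; lra.
Qed.

Lemma arc_midpoint_sim C A B B' :
  arc_midpoint_not_containing O r (sim C) (sim A) (sim B) (sim B') <->
  arc_midpoint_not_containing (0, 0) 1 C A B B'.
Proof.
  unfold arc_midpoint_not_containing.
  rewrite on_circle_sim, !edist_sim, mult_eq_iff, orient_sim_mul, mult_pos_lt0_iff by nra.
  reflexivity.
Qed.

Lemma on_minor_arc_sim X Y D :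
  on_minor_arc O r (sim X) (sim Y) (sim D) <-> on_minor_arc (0, 0) 1 X Y D.
Proof.
  unfold on_minor_arc.
  rewrite on_circle_sim, <- sim_origin, orient_sim_mul, mult_pos_le0_iff by nra.
  reflexivity.
Qed.

Lemma convex_quad_sim P Q S T :
  convex_quad (sim P) (sim Q) (sim S) (sim T) <-> convex_quad P Q S T.
Proof.
  unfold convex_quad; rewrite !orient_sim.
  destruct e_cases as [-> | ->]; split;
    intros [(h1 & h2 & h3 & h4) | (h1 & h2 & h3 & h4)];
    solve [left; repeat split; nra | right; repeat split; nra].
Qed.

Lemma tangential_quad_sim P Q S T :
  tangential_quad (sim P) (sim Q) (sim S) (sim T) <-> tangential_quad P Q S T.
Proof.
  unfold tangential_quad; rewrite convex_quad_sim, !edist_sim, <- !Rmult_plus_distr_l,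
    mult_eq_iff by lra.
  reflexivity.
Qed.

Lemma pitot_length_sim A B C : pitot_length r (sim A) (sim B) (sim C) = r * pitot_length 1 A B C.
Proof. unfold pitot_length; rewrite !angle_sim; ring. Qed.

Lemma pitot_configuration_sim A B C B' E F :
  pitot_configuration O r (sim A) (sim B) (sim C) (sim B') (sim E) (sim F) ->
  pitot_configuration (0, 0) 1 A B C B' E F.
Proof.
  intros [hA hB hC hAB hBC hCA hlen hmid hE hEB' hperp hF1 hF2].
  rewrite on_circle_sim in hA, hB, hC, hE; rewrite sim_inj in hAB, hBC, hCA, hEB'.
  rewrite arc_midpoint_sim in hmid; rewrite dotv_sim_eq0 in hperp, hF1.
  rewrite collinear_sim in hF2; rewrite !edist_sim in hlen.
  constructor; auto; nra.
Qed.

Lemma pitot_conclusion_sim A B C B' F :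
  pitot_conclusion (0, 0) 1 A B C B' F ->
  pitot_conclusion O r (sim A) (sim B) (sim C) (sim B') (sim F).
Proof.
  intros (hFA & hiff & hex & htan); unfold pitot_conclusion.
  rewrite pitot_length_sim, !edist_sim, hFA; split; [reflexivity |]; split; [|split].
  - intro D; rewrite <- (sim_invK D), on_minor_arc_sim, !edist_sim, <- !Rmult_plus_distr_l,
      !mult_eq_iff by lra.
    apply hiff.
  - destruct hex as (D & hD & hDB'); exists (sim D).
    rewrite on_minor_arc_sim, edist_sim, hDB', hFA; auto.
  - intro D; rewrite <- (sim_invK D), on_minor_arc_sim, edist_sim, mult_eq_iff,
      tangential_quad_sim by lra.
    rewrite <- hFA; apply htan.
Qed.

Lemma pitot_transport A B C B' E F :
  (pitot_configuration (0, 0) 1 (sim_inv A) (sim_inv B) (sim_inv C) (sim_inv B')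
     (sim_inv E) (sim_inv F) ->
   pitot_conclusion (0, 0) 1 (sim_inv A) (sim_inv B) (sim_inv C) (sim_inv B') (sim_inv F)) ->
  pitot_configuration O r A B C B' E F -> pitot_conclusion O r A B C B' F.
Proof.
  intros hnormal cfg.
  rewrite <- (sim_invK E) in cfg.
  rewrite <- (sim_invK A), <- (sim_invK B), <- (sim_invK C), <- (sim_invK B'),
    <- (sim_invK F) in cfg |- *.
  apply pitot_conclusion_sim, hnormal, pitot_configuration_sim, cfg.
Qed.

End Similarity.

Lemma sim_frame O r P : 0 < r -> on_circle O r P ->
  exists k1 k2, k1 ^ 2 + k2 ^ 2 = 1 /\ sim_inv O r k1 k2 1 P = csq 1 0.
Proof.
  intros hr hP; unfold on_circle, edist in hP.
  set (dx := fst P - fst O) in *; set (dy := snd P - snd O) in *.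
  assert (hd : dx ^ 2 + dy ^ 2 = r ^ 2).
  { rewrite <- hP, pow2_sqrt by (apply Rplus_le_le_0_compat; apply pow2_ge_0).
    unfold dx, dy; ring. }
  exists (dx / r), (dy / r); split.
  - field_simplify; [rewrite hd; field |]; lra.
  - unfold sim_inv, csq; fold dx dy; f_equal; field_simplify; try lra.
    rewrite hd; field; lra.
Qed.

Lemma pitot_normal A B C E F :
  pitot_configuration (0, 0) 1 A B C (csq 1 0) E F -> pitot_conclusion (0, 0) 1 A B C (csq 1 0) F.
Proof.
  intro cfg; pose proof cfg as [hA _ hC _ _ hCA _ [_ [hmid _]] _ _ _ _ _].
  destruct (equidistant_mirror A C hA hC hmid hCA) as [_ hC0].
  destruct (Rlt_or_le 0 (snd C)) as [hup | hlow].
  - exact (pitot_upper A B C E F cfg hup).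
  - (* reflect in the axis OB' *)
    apply (pitot_transport (0, 0) 1 1 0 (-1)) with (E := E); try (lra || ring); [| exact cfg].
    replace (sim_inv (0, 0) 1 1 0 (-1) (csq 1 0)) with (csq 1 0)
      by (unfold sim_inv, csq; cbn; f_equal; field).
    intro cfg'; apply (pitot_upper _ _ _ _ _ cfg'); cbn; lra.
Qed.

Lemma pitot_general O r A B C B' E F : 0 < r ->
  pitot_configuration O r A B C B' E F -> pitot_conclusion O r A B C B' F.
Proof.
  intros hr cfg; pose proof cfg as [_ _ _ _ _ _ _ [hB' _] _ _ _ _ _].
  destruct (sim_frame O r B' hr hB') as (k1 & k2 & hk & eB').
  apply (pitot_transport O r k1 k2 1) with (E := E); auto; [ring |].
  rewrite eB'; apply pitot_normal.
Qed.

Theorem mainTheorem8 (O A B C B' E F : point) (r : R)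
  (hr : 0 < r)
  (hA : on_circle O r A) (hB : on_circle O r B) (hC : on_circle O r C)
  (hAB : A <> B) (hBC : B <> C) (hCA : C <> A)
  (hlen : edist A B > edist B C)
  (hB' : arc_midpoint_not_containing O r C A B B')
  (hE : on_circle O r E) (hEB' : E <> B') (hEperp : dotv B' E A B = 0)
  (hF1 : dotv A F A E = 0) (hF2 : collinear E B' F) :
  let a := angle B A C in
  let b := angle A B C in
  let c := angle A C B in
  let val := 2 * r * sin ((c - a) / 2) * tan (b / 2) in
  edist F A = val /\
  (forall D : point, on_minor_arc O r C B' D ->
     (edist A B + edist C D = edist B C + edist D A <-> edist D B' = val)) /\
  (exists D : point, on_minor_arc O r C B' D /\ edist D B' = edist F A) /\
  (forall D : point, on_minor_arc O r C B' D -> edist D B' = edist F A ->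
     tangential_quad A B C D).
Proof.
  refine (pitot_general O r A B C B' E F hr _).
  constructor; assumption.
Qed.
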